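(* Consider the Random Majority Model (RMM) on the cycle $C_n$ started from an initial coloring with $b_0=pn$ blue nodes, for some $0\le p\le 1$. Then $\mathbb{E}[b_t]=pn$ for every $t\in\mathbb{N}$, where $b_t$ is the number of blue nodes after round $t$.
   Context: A coloring is a map from the nodes to $\{b,w\}$. In RMM, all nodes update simultaneously in each round: a node adopts the color strictly more frequent among its neighbors in the previous round, and in case of a tie chooses blue or white independently and uniformly at random. *)

From mathcomp Require Import all_boot all_order all_algebra.
Set Implicit Arguments. Unset Strict Implicit. Unset Printing Implicit Defensive.
Import Order.TTheory GRing.Theory Num.Theory.
Local Open Scope ring_scope.

(* A coloring of C_n: nodes are 'I_n, neighbours of v are ordS v and
   ord_pred v (cyclic successor/predecessor); color true = blue, false = white. *)
Definition coloring (n : nat) := {ffun 'I_n -> bool}.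

(* Probability that node v gets color b in the next round, given coloring c.
   v has two neighbours; if they agree, v adopts their (strictly more frequent)
   color; otherwise it is a tie and v chooses uniformly at random. *)
Definition rmm_node_prob (R : fieldType) (n : nat) (c : coloring n)
    (v : 'I_n) (b : bool) : R :=
  let l := c (ord_pred v) in
  let r := c (ordS v) in
  if l == r then (if b == l then 1 else 0) else 2^-1.

Definition rmm_trans (R : fieldType) (n : nat) (c c' : coloring n) : R :=
  \prod_(v : 'I_n) rmm_node_prob R c v (c' v).

Fixpoint rmm_dist (R : fieldType) (n : nat) (c0 : coloring n) (t : nat)
    : coloring n -> R :=
  match t with
  | 0 => fun c => if c == c0 then 1 else 0
  | t'.+1 => fun c' => \sum_(c : coloring n) rmm_dist R c0 t' c * rmm_trans R c c'
  end.

Definition nblue (n : nat) (c : coloring n) : nat := #|[set v | c v]|.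

Definition rmm_expected_blue (R : fieldType) (n : nat) (c0 : coloring n) (t : nat) : R :=
  \sum_(c : coloring n) rmm_dist R c0 t c * (nblue c)%:R.

(* Each node becomes blue with probability the mean of its two neighbours'
   indicators, so by linearity the expected number of blue nodes after one
   round is half the sum of all predecessor and successor indicators, i.e.
   the current number of blue nodes. Hence b_t is a martingale and its
   expectation stays b_0; no assumption on n or p is needed. *)
From mathcomp Require Import all_boot all_order all_algebra.
Import Order.TTheory GRing.Theory Num.Theory.
Local Open Scope ring_scope.

Section RMMMartingale.
Variables (R : fieldType) (n : nat).
Hypothesis two_neq0 : (2 : R) != 0.

Lemma rmm_node_prob_true (c : coloring n) v :
  rmm_node_prob R c v true
  = ((c (ord_pred v) : nat)%:R + (c (ordS v) : nat)%:R) / 2.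
Proof.
rewrite /rmm_node_prob; case: (c (ord_pred v)); case: (c (ordS v)) => /=.
- by rewrite divff.
- by rewrite addr0 div1r.
- by rewrite add0r div1r.
- by rewrite addr0 mul0r.
Qed.

Lemma rmm_node_prob_sum (c : coloring n) v :
  \sum_b rmm_node_prob R c v b = 1.
Proof.
have halves : (2 : R)^-1 + 2^-1 = 1 by rewrite -div1r -mulrDl divff.
rewrite big_bool /rmm_node_prob.
by case: (c (ord_pred v)); case: (c (ordS v)); rewrite /= ?addr0 ?add0r.
Qed.

Lemma rmm_trans_marginal (c : coloring n) w (F : bool -> R) :
  \sum_(c' : coloring n) rmm_trans R c c' * F (c' w)
  = \sum_b rmm_node_prob R c w b * F b.
Proof.
(* Summing a product of per-node factors over all colorings factorises node
   by node, and every node other than w contributes total mass 1. *)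
pose G v b := rmm_node_prob R c v b * (if v == w then F b else 1).
have -> : \sum_(c' : coloring n) rmm_trans R c c' * F (c' w)
          = \sum_(c' : coloring n) \prod_v G v (c' v).
  apply: eq_bigr => c' _; rewrite /rmm_trans /G big_split /=.
  congr (_ * _); rewrite (bigD1 w) //= eqxx big1 ?mulr1 // => v.
  by case: eqP.
rewrite -bigA_distr_bigA /= (bigD1 w) //= [X in _ * X]big1 => [|v vw].
  by rewrite mulr1; apply: eq_bigr => b _; rewrite /G eqxx.
rewrite -[RHS](rmm_node_prob_sum c v); apply: eq_bigr => b _.
by rewrite /G (negbTE vw) mulr1.
Qed.

Lemma nblueE (c : coloring n) : (nblue c)%:R = \sum_v ((c v : nat)%:R : R).
Proof.
rewrite /nblue -sum1_card natr_sum big_mkcond /=.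
by apply: eq_bigr => v _; rewrite inE; case: (c v).
Qed.

Lemma rmm_trans_nblue (c : coloring n) :
  \sum_(c' : coloring n) rmm_trans R c c' * (nblue c')%:R = (nblue c)%:R.
Proof.
under eq_bigr => c' _ do rewrite nblueE mulr_sumr.
rewrite exchange_big /=.
under eq_bigr => w _ do
  rewrite (rmm_trans_marginal c w (fun b => (b : nat)%:R)) big_bool /=
          mulr1 mulr0 addr0 rmm_node_prob_true.
have sum_shift (h : 'I_n -> 'I_n) : injective h ->
    \sum_v ((c (h v) : nat)%:R : R) = (nblue c)%:R.
  by move=> h_inj; rewrite nblueE [RHS](reindex_inj h_inj).
rewrite -mulr_suml big_split /= (sum_shift _ (@ord_pred_inj n)).
rewrite (sum_shift _ (@ordS_inj n)).
by rewrite -mulr2n -(mulr_natr (nblue c)%:R) mulfK.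
Qed.

Lemma rmm_dist_harmonic (c0 : coloring n) (f : coloring n -> R) :
  (forall c, \sum_(c' : coloring n) rmm_trans R c c' * f c' = f c) ->
  forall t, \sum_(c : coloring n) rmm_dist R c0 t c * f c = f c0.
Proof.
move=> f_harmonic; elim => [|t IH] /=.
  rewrite (bigD1 c0) //= eqxx mul1r big1 ?addr0 // => c /negbTE ->.
  by rewrite mul0r.
under eq_bigr => c' _ do rewrite mulr_suml.
rewrite exchange_big /= -[RHS]IH; apply: eq_bigr => c _.
by rewrite -f_harmonic mulr_sumr; apply: eq_bigr => c' _; rewrite mulrA.
Qed.

End RMMMartingale.

Theorem theorem4p2 (R : realFieldType) (n : nat) (hn : (3 <= n)%N)
    (p : R) (hp0 : 0 <= p) (hp1 : p <= 1) (c0 : coloring n)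
    (hb0 : (nblue c0)%:R = p * n%:R) :
  forall t : nat, rmm_expected_blue R c0 t = p * n%:R.
Proof.
have two_neq0 : (2 : R) != 0 by rewrite pnatr_eq0.
move=> t; rewrite -hb0; apply: rmm_dist_harmonic => c.
exact: rmm_trans_nblue two_neq0 c.
Qed.
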